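(* Let $A[1:n]$ be an array of $n$ items drawn from the universe $U=\{0,\dots,u-1\}$. For every fixed $\epsilon \in [0,1/2]$ there exists a static data structure using $O(n^{2-2\epsilon})$ words of storage that, given any query indices $1 \le i \le j \le n$, returns a mode of the multiset $\{A[i],A[i+1],\dots,A[j]\}$ in $O(n^{\epsilon})$ time in the worst case.
   Context: Model: word RAM with word size $\Theta(\log u)$, where elements are drawn from $U=\{0,\dots,u-1\}$. The frequency of an element $x$ in a multiset $S$ is its multiplicity in $S$. A mode of a multiset $S$ is an element $a\in S$ such that $\operatorname{freq}_S(x)\le \operatorname{freq}_S(a)$ for all $x\in S$. $A[i:j]$ denotes the subarray $A[i],\dots,A[j]$, regarded as a multiset for the purpose of computing modes. *)

From Stdlib Require Import Reals List Arith.
Import ListNotations.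

Definition freq (S : list nat) (x : nat) : nat := count_occ Nat.eq_dec S x.

Definition is_mode (S : list nat) (a : nat) : Prop :=
  In a S /\ forall x, In x S -> freq S x <= freq S a.

(** [A[i:j]] with 1-based inclusive indices. *)
Definition subarray (A : list nat) (i j : nat) : list nat :=
  firstn (j - i + 1) (skipn (i - 1) A).

Inductive instr : Type :=
  | IConst (d : nat) (c : nat)
  | IAdd (d a b : nat)
  | ISub (d a b : nat)                  (* R[d] := (R[a] - R[b]) mod 2^w *)
  | IMul (d a b : nat)
  | IDiv (d a b : nat)                  (* R[d] := R[a] / R[b]  (0 if R[b]=0) *)
  | IAnd (d a b : nat)
  | IOr  (d a b : nat)
  | IShl (d a b : nat)
  | IShr (d a b : nat)
  | ILt  (d a b : nat)
  | IEq  (d a b : nat)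
  | ILoad (d a : nat)
  | IStore (a s : nat)
  | IJz (r target : nat)
  | IJmp (target : nat)
  | IHalt.

Definition program := list instr.

Record state := mkState { pc : nat; regs : nat -> nat; mem : nat -> nat }.

Definition upd (f : nat -> nat) (k v : nat) : nat -> nat :=
  fun x => if Nat.eqb x k then v else f x.

Definition wmod (w v : nat) : nat := v mod 2 ^ w.

Definition arith (w : nat) (s : state) (d : nat) (v : nat) : state :=
  mkState (S (pc s)) (upd (regs s) d (wmod w v)) (mem s).

Definition step (w : nat) (i : instr) (s : state) : state :=
  let R := regs s in
  match i with
  | IConst d c => arith w s d c
  | IAdd d a b => arith w s d (R a + R b)
  | ISub d a b => arith w s d (R a + 2 ^ w - R b)
  | IMul d a b => arith w s d (R a * R b)
  | IDiv d a b => arith w s d (R a / R b)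
  | IAnd d a b => arith w s d (Nat.land (R a) (R b))
  | IOr d a b => arith w s d (Nat.lor (R a) (R b))
  | IShl d a b => arith w s d (Nat.shiftl (R a) (R b))
  | IShr d a b => arith w s d (Nat.shiftr (R a) (R b))
  | ILt d a b => arith w s d (if Nat.ltb (R a) (R b) then 1 else 0)
  | IEq d a b => arith w s d (if Nat.eqb (R a) (R b) then 1 else 0)
  | ILoad d a => arith w s d (mem s (R a))
  | IStore a r => mkState (S (pc s)) R (upd (mem s) (R a) (R r))
  | IJz r t => mkState (if Nat.eqb (R r) 0 then t else S (pc s)) R (mem s)
  | IJmp t => mkState t R (mem s)
  | IHalt => s
  end.

(** [exec w P t s = Some R] iff program [P] started in state [s] executes
    [IHalt] within at most [t] steps (the halt counting as one step),
    with final register file [R]. *)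
Fixpoint exec (w : nat) (P : program) (fuel : nat) (s : state)
  : option (nat -> nat) :=
  match fuel with
  | 0 => None
  | S f =>
      match nth_error P (pc s) with
      | None => None
      | Some IHalt => Some (regs s)
      | Some i => exec w P f (step w i s)
      end
  end.

(** Initial query state: memory holds the data structure [D] (cells beyond
    it are 0), register 1 holds [i], register 2 holds [j]. *)
Definition query_state (D : list nat) (i j : nat) : state :=
  mkState 0
    (fun r => if Nat.eqb r 1 then i else if Nat.eqb r 2 then j else 0)
    (fun a => nth a D 0).

From Stdlib Require Import Reals List Arith Lra Lia ZArith.
Import ListNotations.
Open Scope nat_scope.

(* Cut [A] into blocks of [b ~ n^eps] elements and store, for each of the
   [O((n/b)^2) = O(n^(2-2eps))] spans of consecutive blocks, a mode of the span and its
   frequency. A query range is such a span plus fewer than [b] elements on each side, and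
   its mode is either the mode of the span or one of these at most [2b] side elements.
   A candidate [x] at position [p] beats the current best frequency [f] exactly when the
   [f]-th occurrence of [x] after [p] still lies in the range, which one lookup in a table
   of the positions of every value decides. Each successful test raises [f], and [f] can
   only grow from the span's frequency by at most [2b], so a query costs [O(b)] steps.
   The elements right of the span are handled in the same way on the reversed array. *)

(** * Occurrence counts and modes *)

Definition count_upto (X : list nat) (x q : nat) : nat :=
  count_occ Nat.eq_dec (firstn q X) x.

Lemma firstn_add {T} (a d : nat) (l : list T) :
  firstn (a + d) l = firstn a l ++ firstn d (skipn a l).
Proof.
  revert l; induction a as [|a IH]; intros l; simpl; auto.
  destruct l; simpl; [now rewrite firstn_nil | now f_equal].
Qed.

Lemma count_upto_add X x a d :
  count_upto X x (a + d) = count_upto X x a + count_occ Nat.eq_dec (firstn d (skipn a X)) x.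
Proof. unfold count_upto. now rewrite firstn_add, count_occ_app. Qed.

Lemma count_upto_mono X x a b : a <= b -> count_upto X x a <= count_upto X x b.
Proof. intros H. replace b with (a + (b - a)) by lia. rewrite count_upto_add. lia. Qed.

Lemma count_upto_le_add X x a b : a <= b -> count_upto X x b <= count_upto X x a + (b - a).
Proof.
  intros H. replace b with (a + (b - a)) at 1 by lia. rewrite count_upto_add.
  pose proof (count_occ_bound Nat.eq_dec x (firstn (b - a) (skipn a X))) as B.
  rewrite length_firstn in B. lia.
Qed.

Lemma count_upto_le X x q : count_upto X x q <= q.
Proof. pose proof (count_upto_le_add X x 0 q). cbn in *. lia. Qed.

Lemma count_upto_S X x q : q < length X ->
  count_upto X x (S q) = count_upto X x q + (if Nat.eq_dec (nth q X 0) x then 1 else 0).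
Proof.
  intros H. replace (S q) with (q + 1) by lia. rewrite count_upto_add. f_equal.
  destruct (skipn q X) as [|y l] eqn:E.
  - apply (f_equal (@length nat)) in E. rewrite length_skipn in E. simpl in E. lia.
  - assert (nth q X 0 = y) as <-.
    { rewrite <- (firstn_skipn q X) at 1. rewrite E, app_nth2; rewrite length_firstn; [|lia].
      now replace (q - Nat.min q (length X)) with 0 by lia. }
    simpl. now destruct (Nat.eq_dec (nth q X 0) x).
Qed.

Lemma count_upto_beyond X x q : length X <= q -> count_upto X x q = count_occ Nat.eq_dec X x.
Proof. intros. unfold count_upto. now rewrite firstn_all2. Qed.

Lemma freq_subarray A x i j : 1 <= i -> i <= j ->
  freq (subarray A i j) x = count_upto A x j - count_upto A x (i - 1).
Proof.
  intros. unfold freq, subarray.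
  replace j with ((i - 1) + (j - i + 1)) at 2 by lia. rewrite count_upto_add. lia.
Qed.

Lemma count_upto_rev A x q : q <= length A ->
  count_upto (rev A) x q = count_upto A x (length A) - count_upto A x (length A - q).
Proof.
  intros H. unfold count_upto at 1. rewrite firstn_rev, count_occ_rev.
  pose proof (count_upto_add A x (length A - q) q) as E.
  replace (length A - q + q) with (length A) in E by lia.
  rewrite E, firstn_all2 by (rewrite length_skipn; lia). lia.
Qed.

Lemma first_occurrence X x a b : a < b -> count_upto X x a < count_upto X x b ->
  exists p, a < p <= b /\ count_upto X x (p - 1) = count_upto X x a /\
            count_upto X x p = S (count_upto X x a).
Proof.
  induction b as [|b IH]; intros H1 H2; [lia|].
  destruct (Nat.eq_dec (count_upto X x b) (count_upto X x a)) as [E|E].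
  - exists (S b). replace (S b - 1) with b by lia.
    pose proof (count_upto_le_add X x b (S b)). lia.
  - assert (a < b) by (destruct (Nat.eq_dec a b); [subst; congruence | lia]).
    pose proof (count_upto_mono X x a b).
    destruct IH as [p Hp]; [lia|lia|]. exists p; lia.
Qed.

Lemma nth_count_upto_step X x p : 1 <= p ->
  count_upto X x p = S (count_upto X x (p - 1)) -> nth (p - 1) X 0 = x.
Proof.
  intros H1 H2. destruct (le_lt_dec p (length X)).
  - replace p with (S (p - 1)) in H2 at 1 by lia. rewrite count_upto_S in H2 by lia.
    destruct (Nat.eq_dec (nth (p - 1) X 0) x); [auto | lia].
  - rewrite !count_upto_beyond in H2; lia.
Qed.

Definition best_in (l s : list nat) : nat :=
  fold_right (fun a best => if freq l best <? freq l a then a else best) 0 s.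

Definition mode_of (l : list nat) : nat := best_in l l.

Lemma freq_le_best_in l s y : In y s -> freq l y <= freq l (best_in l s).
Proof.
  induction s as [|a s IH]; simpl; intros Hy; [contradiction|].
  destruct (Nat.ltb_spec (freq l (best_in l s)) (freq l a)), Hy; subst; auto.
  specialize (IH H0). lia.
Qed.

Lemma best_in_0_or_In l s : best_in l s = 0 \/ In (best_in l s) s.
Proof.
  induction s as [|a s IH]; simpl; auto.
  destruct (freq l _ <? freq l a); [now right; left | destruct IH; auto].
Qed.

Lemma freq_le_mode_of l y : freq l y <= freq l (mode_of l).
Proof.
  destruct (in_dec Nat.eq_dec y l) as [Hy|Hy].
  - now apply freq_le_best_in.
  - unfold freq at 1. rewrite (proj1 (count_occ_not_In _ _ _) Hy). lia.
Qed.

Lemma mode_of_lt l V : Forall (fun x => x < V) l -> 0 < V -> mode_of l < V.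
Proof.
  intros H HV. rewrite Forall_forall in H.
  destruct (best_in_0_or_In l l) as [E|E]; unfold mode_of; [lia | auto].
Qed.

(** * The table of occurrence positions *)

Definition elem (X : list nat) (p : nat) : nat := nth (p - 1) X 0.

Lemma elem_lt X V p : Forall (fun x => x < V) X -> 0 < V -> elem X p < V.
Proof.
  intros H HV. unfold elem. destruct (le_lt_dec (length X) (p - 1)).
  - now rewrite nth_overflow.
  - rewrite Forall_forall in H. apply H, nth_In. auto.
Qed.

(* Since [count_upto X y] is nondecreasing, [occ_pos X y k] is the least [q] with
   [count_upto X y q > k]: the position of the [(k+1)]-th occurrence of [y], or
   [length X + 1] if there is none. *)
Definition occ_pos (X : list nat) (y k : nat) : nat :=
  length (filter (fun q => count_upto X y q <=? k) (seq 0 (S (length X)))).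

Lemma occ_pos_le X y k jj : jj <= length X ->
  occ_pos X y k <= jj <-> k < count_upto X y jj.
Proof.
  intros Hj. unfold occ_pos.
  replace (S (length X)) with (jj + (S (length X) - jj)) by lia.
  rewrite seq_app, filter_app, length_app. split.
  - intros H. destruct (Nat.lt_ge_cases k (count_upto X y jj)) as [|Hc]; auto. exfalso.
    rewrite forallb_filter_id, length_seq in H.
    2:{ apply forallb_forall. intros q Hq. apply in_seq in Hq. apply Nat.leb_le.
        pose proof (count_upto_mono X y q jj). lia. }
    replace (S (length X) - jj) with (S (length X - jj)) in H by lia.
    simpl in H. rewrite (proj2 (Nat.leb_le _ k)) in H by lia. simpl in H. lia.
  - intros H. rewrite (filter_ext_in _ (fun _ => false) (seq (0 + jj) _)), filter_false.
    + pose proof (filter_length_le (fun q => count_upto X y q <=? k) (seq 0 jj)) as L.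
      rewrite length_seq in L. simpl. lia.
    + intros q Hq. apply in_seq in Hq. apply Nat.leb_gt. pose proof (count_upto_mono X y jj q). lia.
Qed.

Lemma occ_pos_le_S X y k : occ_pos X y k <= S (length X).
Proof.
  unfold occ_pos. rewrite <- (length_seq (S (length X)) 0) at 2. apply filter_length_le.
Qed.

(* The positions of every value [y < V], value by value, each in increasing order;
   the occurrences of [y] start at index [occ_offset X y]. *)
Definition occ_list (X : list nat) (y : nat) : list nat :=
  map (occ_pos X y) (seq 0 (count_occ Nat.eq_dec X y)).

Definition occ_table (X : list nat) (V : nat) : list nat := concat (map (occ_list X) (seq 0 V)).

Definition occ_offset (X : list nat) (y : nat) : nat :=
  list_sum (map (count_occ Nat.eq_dec X) (seq 0 y)).

Lemma length_occ_prefix X y : length (concat (map (occ_list X) (seq 0 y))) = occ_offset X y.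
Proof.
  rewrite length_concat, map_map. unfold occ_offset. f_equal.
  apply map_ext. intros z. unfold occ_list. now rewrite length_map, length_seq.
Qed.

Lemma nth_occ_table X V y k : y < V -> k < count_occ Nat.eq_dec X y ->
  nth (occ_offset X y + k) (occ_table X V) 0 = occ_pos X y k.
Proof.
  intros Hy Hk. unfold occ_table.
  replace V with (y + S (V - y - 1)) by lia. rewrite seq_app, map_app, concat_app.
  rewrite <- length_occ_prefix, app_nth2_plus. simpl.
  rewrite app_nth1 by (unfold occ_list; rewrite length_map, length_seq; lia).
  unfold occ_list. rewrite nth_indep with (d' := occ_pos X y 0) by (rewrite length_map, length_seq; auto).
  now rewrite map_nth, seq_nth.
Qed.

Lemma occ_table_le X V : Forall (fun v => v <= S (length X)) (occ_table X V).
Proof.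
  apply Forall_forall. intros v Hv. apply in_concat in Hv as [l [Hl Hv]].
  apply in_map_iff in Hl as [y [<- _]]. apply in_map_iff in Hv as [k [<- _]].
  apply occ_pos_le_S.
Qed.

Lemma occ_offset_S X y : occ_offset X (S y) = occ_offset X y + count_occ Nat.eq_dec X y.
Proof. unfold occ_offset. rewrite seq_S, map_app, list_sum_app. simpl. lia. Qed.

Lemma occ_offset_cons a X y :
  occ_offset (a :: X) y = occ_offset X y + (if a <? y then 1 else 0).
Proof.
  induction y as [|y IH]; [reflexivity|]. rewrite !occ_offset_S, IH. simpl.
  destruct (Nat.eq_dec a y), (Nat.ltb_spec a y), (Nat.ltb_spec a (S y)); lia.
Qed.

Lemma occ_offset_le X y : occ_offset X y <= length X.
Proof.
  induction X as [|a X IH]; simpl.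
  - induction y as [|y IH]; [reflexivity|]. rewrite occ_offset_S. simpl. lia.
  - rewrite occ_offset_cons. destruct (a <? y); lia.
Qed.

Lemma count_upto_le_count X x q : count_upto X x q <= count_occ Nat.eq_dec X x.
Proof.
  destruct (le_lt_dec (length X) q); [now rewrite count_upto_beyond|].
  rewrite <- (count_upto_beyond X x (length X)) by lia. apply count_upto_mono. lia.
Qed.

(* [occ_rank X p] is the index in [occ_table] of the occurrence at position [p];
   the occurrences of the same value end just before [occ_end X p]. *)
Definition occ_rank (X : list nat) (p : nat) : nat :=
  occ_offset X (elem X p) + count_upto X (elem X p) (p - 1).

Definition occ_end (X : list nat) (p : nat) : nat := occ_offset X (S (elem X p)).

Lemma occ_rank_le_end X p : occ_rank X p <= occ_end X p.
Proof.
  unfold occ_rank, occ_end. rewrite occ_offset_S.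
  pose proof (count_upto_le_count X (elem X p) (p - 1)). lia.
Qed.

Lemma occ_end_le X p : occ_end X p <= length X.
Proof. apply occ_offset_le. Qed.

Definition tail_freq (X : list nat) (jj p : nat) : nat :=
  count_upto X (elem X p) jj - count_upto X (elem X p) (p - 1).

(* The [h]-th occurrence after the one at position [p] (counting that one as the
   [0]-th) exists and lies in [1..jj] iff [elem X p] occurs more than [h] times in
   [X[p..jj]]. *)
Lemma occ_table_test X V p jj h : elem X p < V -> jj <= length X ->
  (occ_rank X p + h < occ_end X p /\ nth (occ_rank X p + h) (occ_table X V) 0 < S jj) <->
  h < tail_freq X jj p.
Proof.
  intros Hx Hj. unfold occ_rank, occ_end, tail_freq. rewrite occ_offset_S.
  set (x := elem X p) in *.
  pose proof (count_upto_le_count X x jj). pose proof (count_upto_le_count X x (p - 1)).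
  rewrite <- Nat.add_assoc. split.
  - intros [H1 H2]. rewrite nth_occ_table in H2 by lia.
    assert (occ_pos X x (count_upto X x (p - 1) + h) <= jj) as Hle by lia.
    apply occ_pos_le in Hle; lia.
  - intros H1. rewrite nth_occ_table by lia.
    assert (occ_pos X x (count_upto X x (p - 1) + h) <= jj) by (apply occ_pos_le; lia). lia.
Qed.

(** * Scanning candidates *)

Fixpoint scan (cc xv : nat -> nat) (p cnt f m : nat) : nat * nat :=
  match cnt with
  | 0 => (f, m)
  | S c => if f <? cc p then scan cc xv (S p) c (cc p) (xv p) else scan cc xv (S p) c f m
  end.

Section Scan.
Variables cc xv : nat -> nat.

Lemma scan_S p c f m :
  scan cc xv p (S c) f m = scan cc xv (S p) c (Nat.max f (cc p)) (if f <? cc p then xv p else m).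
Proof.
  simpl. destruct (Nat.ltb_spec f (cc p)); [rewrite Nat.max_r | rewrite Nat.max_l]; auto; lia.
Qed.

Lemma le_scan p c f m : f <= fst (scan cc xv p c f m).
Proof.
  revert p f m; induction c as [|c IH]; intros p f m; simpl; auto.
  destruct (Nat.ltb_spec f (cc p)); [specialize (IH (S p) (cc p) (xv p)); lia | apply IH].
Qed.

Lemma scan_ge p c f m q : p <= q < p + c -> cc q <= fst (scan cc xv p c f m).
Proof.
  revert p f m; induction c as [|c IH]; intros p f m Hq; [lia|].
  rewrite scan_S. destruct (Nat.eq_dec q p) as [->|].
  - pose proof (le_scan (S p) c (Nat.max f (cc p)) (if f <? cc p then xv p else m)). lia.
  - apply IH. lia.
Qed.

Lemma scan_sound (F : nat -> nat) p c f m :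
  (forall q, p <= q < p + c -> cc q <= F (xv q)) ->
  f <= F m -> fst (scan cc xv p c f m) <= F (snd (scan cc xv p c f m)).
Proof.
  revert p f m; induction c as [|c IH]; intros p f m H Hf; simpl; auto.
  destruct (Nat.ltb_spec f (cc p)); apply IH; auto; intros; apply H; lia.
Qed.

Lemma scan_le p c f m B :
  (forall q, p <= q < p + c -> cc q <= B) -> fst (scan cc xv p c f m) <= Nat.max f B.
Proof.
  revert p f m; induction c as [|c IH]; intros p f m H; simpl; [lia|].
  destruct (Nat.ltb_spec f (cc p)).
  - assert (cc p <= B) by (apply H; lia).
    specialize (IH (S p) (cc p) (xv p) ltac:(intros; apply H; lia)). lia.
  - apply IH. intros; apply H; lia.
Qed.

End Scan.

(* A value occurring in [X[ii..e]] is found by the scan at its first occurrence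
   there, with its full frequency in [X[ii..jj]]. *)
Lemma scan_tail_freq_ge X jj ii c f m x e :
  1 <= ii -> e <= ii + c - 1 -> e <= jj -> count_upto X x (ii - 1) < count_upto X x e ->
  count_upto X x jj - count_upto X x (ii - 1) <= fst (scan (tail_freq X jj) (elem X) ii c f m).
Proof.
  intros H1 H2 H3 H4.
  assert (ii - 1 < e).
  { destruct (le_lt_dec e (ii - 1)); auto. pose proof (count_upto_mono X x e (ii - 1)). lia. }
  destruct (first_occurrence X x (ii - 1) e) as [q [Hq1 [Hq2 Hq3]]]; auto.
  assert (elem X q = x) by (apply nth_count_upto_step; [lia | congruence]).
  assert (tail_freq X jj q = count_upto X x jj - count_upto X x (ii - 1)) as <-
    by (unfold tail_freq; congruence).
  apply scan_ge. lia.
Qed.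

Lemma tail_freq_le X jj p : tail_freq X jj p <= jj.
Proof. unfold tail_freq. pose proof (count_upto_le X (elem X p) jj). lia. Qed.

Lemma count_upto_rev_sub A x s t : s <= t <= length A ->
  count_upto (rev A) x t - count_upto (rev A) x s =
  count_upto A x (length A - s) - count_upto A x (length A - t).
Proof.
  intros H. rewrite !count_upto_rev by lia.
  pose proof (count_upto_mono A x (length A - t) (length A - s)).
  pose proof (count_upto_mono A x (length A - s) (length A)). lia.
Qed.

(** * Decomposition of a query range *)

(* Block [x] is [A[b*x+1 .. b*x+b]]. For a query [i..j] the span consists of the
   blocks [first_block b i] to [j/b - 1]; the fragments around it are [A[i..b*first_block b i]]
   and [A[b*(j/b)+1..j]], both of fewer than [b] elements. *)
Definition first_block (b i : nat) : nat := (i + b - 2) / b.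

Lemma first_block_bounds b i : 1 <= b -> i - 1 <= b * first_block b i <= i + b - 2.
Proof.
  intros Hb. unfold first_block. pose proof (Nat.Div0.mul_div_le (i + b - 2) b).
  pose proof (Nat.mul_succ_div_gt (i + b - 2) b). lia.
Qed.

Lemma last_block_bounds b j : 1 <= b -> b * (j / b) <= j < b * (j / b) + b.
Proof.
  intros Hb. pose proof (Nat.Div0.mul_div_le j b). pose proof (Nat.mul_succ_div_gt j b). lia.
Qed.

Definition blocks (A : list nat) (b x y : nat) : list nat :=
  firstn (b * y - b * x) (skipn (b * x) A).

Definition span (A : list nat) (b i j : nat) : list nat := blocks A b (first_block b i) (j / b).

Definition prefix_end (A : list nat) (b i : nat) : nat :=
  Nat.min (b * first_block b i + 1) (length A + 1).

Definition left_scan (A : list nat) (b i j : nat) : nat * nat :=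
  scan (tail_freq A j) (elem A) i (prefix_end A b i - i)
    (freq (span A b i j) (mode_of (span A b i j))) (mode_of (span A b i j)).

(* Position [q] of [rev A] is position [length A + 1 - q] of [A]. *)
Definition query_scan (A : list nat) (b i j : nat) : nat * nat :=
  scan (tail_freq (rev A) (length A + 1 - i)) (elem (rev A)) (length A + 1 - j) (j - b * (j / b))
    (fst (left_scan A b i j)) (snd (left_scan A b i j)).

Lemma freq_blocks A b x y z :
  freq (blocks A b x y) z = count_upto A z (b * x + (b * y - b * x)) - count_upto A z (b * x).
Proof. unfold freq, blocks. rewrite count_upto_add. lia. Qed.

Lemma prefix_end_bounds A b i : 1 <= b -> i <= length A ->
  i <= prefix_end A b i <= length A + 1 /\ prefix_end A b i - i <= b.
Proof. intros Hb Hi. pose proof (first_block_bounds b i Hb). unfold prefix_end. lia. Qed.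

Lemma span_freq_le_length A b i j : freq (span A b i j) (mode_of (span A b i j)) <= length A.
Proof.
  unfold freq. eapply Nat.le_trans; [apply count_occ_bound|].
  unfold span, blocks. rewrite length_firstn, length_skipn. lia.
Qed.

Lemma left_scan_freq_le_length A b i j : j <= length A -> fst (left_scan A b i j) <= length A.
Proof.
  intros Hj. eapply Nat.le_trans; [apply scan_le with (B := j); intros; apply tail_freq_le|].
  pose proof (span_freq_le_length A b i j). lia.
Qed.

Section Query.
Variables (A : list nat) (b i j : nat).
Hypotheses (Hb : 1 <= b) (Hi : 1 <= i) (Hij : i <= j) (Hj : j <= length A).

Let n := length A.
Let F z := count_upto A z j - count_upto A z (i - 1).
Let f0 := freq (span A b i j) (mode_of (span A b i j)).

Lemma freq_span_le_range z : freq (span A b i j) z <= F z.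
Proof.
  unfold span. rewrite freq_blocks. unfold F.
  pose proof (first_block_bounds b i Hb). pose proof (last_block_bounds b j Hb).
  set (x := first_block b i) in *. set (y := j / b) in *.
  destruct (Nat.eq_dec (b * y - b * x) 0) as [E|E]; [rewrite E, Nat.add_0_r; lia|].
  pose proof (count_upto_mono A z (i - 1) (b * x) ltac:(lia)).
  pose proof (count_upto_mono A z (b * x + (b * y - b * x)) j ltac:(lia)). lia.
Qed.

Lemma tail_freq_le_left q : i <= q -> tail_freq A j q <= F (elem A q).
Proof.
  intros Hq. unfold tail_freq, F. pose proof (count_upto_mono A (elem A q) (i - 1) (q - 1)). lia.
Qed.

Lemma tail_freq_le_right q : n + 1 - j <= q <= n ->
  tail_freq (rev A) (n + 1 - i) q <= F (elem (rev A) q).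
Proof.
  intros Hq. unfold tail_freq, F. set (x := elem (rev A) q).
  rewrite !count_upto_rev by (unfold n in *; lia).
  replace (length A - (n + 1 - i)) with (i - 1) by (unfold n; lia).
  pose proof (count_upto_mono A x (length A - (q - 1)) j).
  pose proof (count_upto_mono A x j (length A)). lia.
Qed.

Lemma query_scan_sound : fst (query_scan A b i j) <= F (snd (query_scan A b i j)).
Proof.
  pose proof (last_block_bounds b j Hb).
  apply scan_sound; [intros q Hq; apply tail_freq_le_right; unfold n in *; lia|].
  apply scan_sound; [intros q Hq; apply tail_freq_le_left; lia|].
  apply freq_span_le_range.
Qed.

(* Either [z] occurs in the left fragment, where the left scan meets its first
   occurrence, or in the right fragment, where the right scan meets its last one,
   or all its occurrences in [A[i..j]] lie in the span. *)
Lemma query_scan_complete z : F z <= fst (query_scan A b i j).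
Proof.
  pose proof (first_block_bounds b i Hb) as LB. pose proof (last_block_bounds b j Hb) as RB.
  set (bl := b * first_block b i) in *. set (br := b * (j / b)) in *.
  assert (M1 : fst (left_scan A b i j) <= fst (query_scan A b i j)) by apply le_scan.
  destruct (Nat.lt_ge_cases (count_upto A z (i - 1)) (count_upto A z (Nat.min bl j))) as [C1|C1].
  { enough (F z <= fst (left_scan A b i j)) by lia.
    apply scan_tail_freq_ge with (e := Nat.min bl j); auto; unfold prefix_end; fold bl; lia. }
  set (t := Nat.min (n - br) (n + 1 - i)).
  destruct (Nat.lt_ge_cases (count_upto (rev A) z (n + 1 - j - 1)) (count_upto (rev A) z t))
    as [C2|C2].
  { assert (P : count_upto (rev A) z (n + 1 - i) - count_upto (rev A) z (n + 1 - j - 1)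
                <= fst (query_scan A b i j))
      by (apply scan_tail_freq_ge with (e := t); unfold t, n in *; lia).
    rewrite count_upto_rev_sub in P by (unfold n; lia).
    replace (length A - (n + 1 - j - 1)) with j in P by (unfold n; lia).
    replace (length A - (n + 1 - i)) with (i - 1) in P by (unfold n; lia).
    exact P. }
  rewrite !count_upto_rev in C2 by (unfold t, n in *; lia).
  replace (length A - (n + 1 - j - 1)) with j in C2 by (unfold n; lia).
  replace (length A - t) with (Nat.max br (i - 1)) in C2 by (unfold t, n in *; lia).
  pose proof (count_upto_mono A z j (length A) Hj).
  pose proof (count_upto_mono A z (i - 1) (Nat.min bl j) ltac:(lia)).
  pose proof (count_upto_mono A z (Nat.max br (i - 1)) j ltac:(lia)).
  destruct (le_lt_dec br bl).
  { pose proof (count_upto_mono A z (Nat.max br (i - 1)) (Nat.min bl j) ltac:(lia)).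
    unfold F. lia. }
  assert (Fz : freq (span A b i j) z <= fst (left_scan A b i j))
    by (eapply Nat.le_trans; [apply freq_le_mode_of | apply le_scan]).
  unfold span in Fz. rewrite freq_blocks in Fz. fold bl br in Fz.
  replace (bl + (br - bl)) with br in Fz by lia.
  replace (Nat.min bl j) with bl in * by lia. replace (Nat.max br (i - 1)) with br in * by lia.
  unfold F. lia.
Qed.

Lemma query_scan_is_mode : is_mode (subarray A i j) (snd (query_scan A b i j)).
Proof.
  assert (F_elem : 1 <= F (elem A i)).
  { unfold F. pose proof (count_upto_mono A (elem A i) i j Hij).
    pose proof (count_upto_S A (elem A i) (i - 1) ltac:(lia)) as E.
    replace (S (i - 1)) with i in E by lia.
    destruct (Nat.eq_dec (nth (i - 1) A 0) (elem A i)) as [_|C]; [lia | now elim C]. }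
  pose proof query_scan_sound. pose proof (query_scan_complete (elem A i)).
  split.
  - apply (count_occ_In Nat.eq_dec). fold (freq (subarray A i j) (snd (query_scan A b i j))).
    rewrite freq_subarray by lia. fold (F (snd (query_scan A b i j))). lia.
  - intros x _. rewrite !freq_subarray by lia.
    pose proof (query_scan_complete x). unfold F in *. lia.
Qed.

Lemma range_freq_le_span_add z : F z <= f0 + 2 * b.
Proof.
  pose proof (first_block_bounds b i Hb). pose proof (last_block_bounds b j Hb). unfold F.
  set (bl := b * first_block b i) in *. set (br := b * (j / b)) in *.
  destruct (le_lt_dec bl br).
  - assert (Fz : freq (blocks A b (first_block b i) (j / b)) z <= f0) by apply freq_le_mode_of.
    rewrite freq_blocks in Fz. fold bl br in Fz.
    replace (bl + (br - bl)) with br in Fz by lia.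
    pose proof (count_upto_le_add A z br j ltac:(lia)).
    pose proof (count_upto_le_add A z (i - 1) bl ltac:(lia)). lia.
  - pose proof (count_upto_le_add A z (i - 1) j ltac:(lia)). lia.
Qed.

Lemma query_freq_le : fst (query_scan A b i j) <= f0 + 2 * b.
Proof.
  pose proof (last_block_bounds b j Hb).
  eapply Nat.le_trans; [apply scan_le with (B := f0 + 2 * b)|].
  - intros q Hq. eapply Nat.le_trans; [apply tail_freq_le_right | apply range_freq_le_span_add].
    unfold n in *; lia.
  - enough (fst (left_scan A b i j) <= f0 + 2 * b) by lia.
    eapply Nat.le_trans; [apply scan_le with (B := f0 + 2 * b)|].
    intros q Hq. eapply Nat.le_trans; [apply tail_freq_le_left | apply range_freq_le_span_add]. lia.
    unfold f0; lia.
Qed.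

End Query.

(** * The stored words *)

Definition value_bound (A : list nat) : nat := S (list_max A).

Lemma value_bound_spec A : Forall (fun x => x < value_bound A) A.
Proof.
  apply Forall_forall. intros x Hx. unfold value_bound.
  pose proof (proj1 (list_max_le A (list_max A)) (le_n _)) as H.
  rewrite Forall_forall in H. specialize (H x Hx). lia.
Qed.

Lemma value_bound_rev A : Forall (fun x => x < value_bound A) (rev A).
Proof.
  apply Forall_forall. intros x Hx. apply in_rev in Hx.
  pose proof (value_bound_spec A) as H. rewrite Forall_forall in H. auto.
Qed.

(* Memory layout: cell [k < 14] holds [array_base k n], the address of array [k],
   which has [n + 1] entries indexed by a position [p]; the table of
   [table_dim n b]^2 spans of blocks follows, two cells per span (frequency, mode). *)
Definition array_base (k n : nat) : nat := 14 + k * S n.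
Definition table_base (n : nat) : nat := array_base 14 n.
Definition table_dim (n b : nat) : nat := n / b + 2.

Definition array_entry (A : list nat) (b k p : nat) : nat :=
  let n := length A in
  match k with
  | 0 => table_base n + 2 * table_dim n b * first_block b p
  | 1 => 2 * (p / b)
  | 2 => prefix_end A b p
  | 3 => occ_rank A p
  | 4 => occ_end A p
  | 5 => nth p (occ_table A (value_bound A)) 0
  | 6 => elem A p
  | 7 => occ_rank (rev A) p
  | 8 => occ_end (rev A) p
  | 9 => nth p (occ_table (rev A) (value_bound A)) 0
  | 10 => elem (rev A) p
  | 11 => n + 1 - p
  | 12 => n + 1 - b * (p / b)
  | _ => n + 2 - p
  end.

Definition table_entry (A : list nat) (b t : nat) : nat :=
  let d := table_dim (length A) b in
  let s := blocks A b (t / 2 / d) (t / 2 mod d) in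
  if t mod 2 =? 0 then freq s (mode_of s) else mode_of s.

Definition cell (A : list nat) (b a : nat) : nat :=
  let n := length A in
  if a <? 14 then array_base a n
  else if a <? table_base n then array_entry A b ((a - 14) / S n) ((a - 14) mod S n)
  else table_entry A b (a - table_base n).

Definition store_size (A : list nat) (b : nat) : nat :=
  table_base (length A) + 2 * (table_dim (length A) b * table_dim (length A) b).

Definition store (A : list nat) (b : nat) : list nat := map (cell A b) (seq 0 (store_size A b)).

Lemma length_store A b : length (store A b) = store_size A b.
Proof. unfold store. now rewrite length_map, length_seq. Qed.

Lemma nth_store A b a : a < store_size A b -> nth a (store A b) 0 = cell A b a.
Proof.
  intros H. unfold store.
  rewrite nth_indep with (d' := cell A b 0) by (rewrite length_map, length_seq; auto).
  now rewrite map_nth, seq_nth.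
Qed.

Lemma divmod_eq q d r : r < d -> (q * d + r) / d = q /\ (q * d + r) mod d = r.
Proof.
  intros H. split; symmetry; [apply Nat.div_unique with r | apply Nat.mod_unique with q]; lia.
Qed.

Lemma store_header A b k : k < 14 -> nth k (store A b) 0 = array_base k (length A).
Proof.
  intros Hk. rewrite nth_store by (unfold store_size, table_base, array_base; lia).
  unfold cell. now rewrite (proj2 (Nat.ltb_lt k 14) Hk).
Qed.

Lemma store_array A b k p : k < 14 -> p <= length A ->
  nth (array_base k (length A) + p) (store A b) 0 = array_entry A b k p.
Proof.
  intros Hk Hp. rewrite nth_store by (unfold store_size, table_base, array_base; nia).
  unfold cell, table_base, array_base.
  rewrite (proj2 (Nat.ltb_ge _ 14)), (proj2 (Nat.ltb_lt _ _)) by nia.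
  replace (14 + k * S (length A) + p - 14) with (k * S (length A) + p) by lia.
  destruct (divmod_eq k (S (length A)) p ltac:(lia)) as [-> ->]. reflexivity.
Qed.

Lemma store_table A b x y c : c < 2 ->
  x < table_dim (length A) b -> y < table_dim (length A) b ->
  nth (table_base (length A) + 2 * table_dim (length A) b * x + 2 * y + c) (store A b) 0 =
  (if c =? 0 then freq (blocks A b x y) (mode_of (blocks A b x y)) else mode_of (blocks A b x y)).
Proof.
  intros Hc Hx Hy. set (d := table_dim (length A) b) in *.
  rewrite nth_store by (unfold store_size; fold d; nia). unfold cell.
  rewrite (proj2 (Nat.ltb_ge _ 14)) by (unfold table_base, array_base; lia).
  rewrite (proj2 (Nat.ltb_ge _ _)) by lia.
  unfold table_entry. fold d.
  replace (table_base (length A) + 2 * d * x + 2 * y + c - table_base (length A))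
    with ((x * d + y) * 2 + c) by lia.
  destruct (divmod_eq (x * d + y) 2 c Hc) as [-> ->].
  destruct (divmod_eq x d y Hy) as [-> ->]. reflexivity.
Qed.

Lemma first_block_lt_dim n b p : 1 <= b -> p <= n -> first_block b p < table_dim n b.
Proof.
  intros Hb Hp. unfold first_block, table_dim.
  assert ((p + b - 2) / b <= (n + 1 * b) / b) by (apply Nat.Div0.div_le_mono; lia).
  rewrite Nat.div_add in H by lia. lia.
Qed.

Lemma div_lt_dim n b p : p <= n -> p / b < table_dim n b.
Proof.
  intros Hp. unfold table_dim. pose proof (Nat.Div0.div_le_mono p n b Hp). lia.
Qed.

Lemma Forall_blocks (P : nat -> Prop) A b x y : Forall P A -> Forall P (blocks A b x y).
Proof.
  intros H. unfold blocks. rewrite <- (firstn_skipn (b * x) A) in H.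
  apply Forall_app in H as [_ H].
  rewrite <- (firstn_skipn (b * y - b * x) (skipn (b * x) A)) in H.
  now apply Forall_app in H as [H _].
Qed.

Lemma nth_le_of_Forall (l : list nat) B p : Forall (fun v => v <= B) l -> nth p l 0 <= B.
Proof.
  intros H. destruct (le_lt_dec (length l) p); [rewrite nth_overflow by auto; lia|].
  rewrite Forall_forall in H. apply H, nth_In. auto.
Qed.

Lemma array_entry_le A b k p : 1 <= b -> k < 14 -> p <= length A ->
  array_entry A b k p <= store_size A b + value_bound A + length A + 2.
Proof.
  intros Hb Hk Hp. set (V := value_bound A).
  assert (V0 : 0 < V) by (unfold V, value_bound; lia).
  pose proof (occ_rank_le_end A p). pose proof (occ_end_le A p).
  pose proof (occ_rank_le_end (rev A) p). pose proof (occ_end_le (rev A) p).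
  pose proof (elem_lt A V p (value_bound_spec A) V0).
  pose proof (elem_lt (rev A) V p (value_bound_rev A) V0).
  pose proof (nth_le_of_Forall _ _ p (occ_table_le A V)).
  pose proof (nth_le_of_Forall _ _ p (occ_table_le (rev A) V)).
  pose proof (first_block_lt_dim (length A) b p Hb Hp).
  pose proof (Nat.Div0.div_le_upper_bound p b p ltac:(nia)).
  rewrite length_rev in *. unfold store_size, prefix_end, table_base, array_base in *.
  destruct k as [|[|[|[|[|[|[|[|[|[|[|[|[|k]]]]]]]]]]]]]; cbn [array_entry];
    fold V; unfold prefix_end, table_base, array_base; nia.
Qed.

Lemma cell_le A b a : 1 <= b -> a < store_size A b ->
  cell A b a <= store_size A b + value_bound A + length A + 2.
Proof.
  intros Hb Ha. set (n := length A) in *. unfold cell. fold n.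
  destruct (Nat.ltb_spec a 14).
  { unfold array_base, store_size, table_base, array_base. fold n. nia. }
  destruct (Nat.ltb_spec a (table_base n)).
  - apply array_entry_le; auto.
    + apply Nat.Div0.div_lt_upper_bound. unfold table_base, array_base in *. lia.
    + pose proof (Nat.mod_upper_bound (a - 14) (S n)). fold n. lia.
  - unfold table_entry. fold n.
    set (s := blocks A b _ _).
    assert (V0 : 0 < value_bound A) by (unfold value_bound; lia).
    destruct (_ =? 0).
    + unfold freq. pose proof (count_occ_bound Nat.eq_dec (mode_of s) s).
      assert (length s <= n) by (unfold s, blocks; rewrite length_firstn, length_skipn; fold n; lia).
      lia.
    + pose proof (mode_of_lt s _ (Forall_blocks _ A b _ _ (value_bound_spec A)) V0). lia.
Qed.

(** * Execution of the query program *)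

Definition runs_within (w : nat) (P : program) (t : nat) (s : state)
  (Q : (nat -> nat) -> Prop) : Prop :=
  exists t' R, t' <= t /\ exec w P t' s = Some R /\ Q R.

Lemma runs_within_mono w P t t' s Q : t <= t' -> runs_within w P t s Q -> runs_within w P t' s Q.
Proof. intros H [t0 [R [H1 H2]]]. exists t0, R. split; [lia | auto]. Qed.

Lemma runs_within_halt w P t s Q :
  nth_error P (pc s) = Some IHalt -> Q (regs s) -> runs_within w P (S t) s Q.
Proof. intros H1 H2. exists 1, (regs s). split; [lia|]. simpl. now rewrite H1. Qed.

Section Steps.
Variables (w : nat) (P : program) (t : nat) (Q : (nat -> nat) -> Prop) (pc0 : nat) (R M : nat -> nat).

Lemma runs_within_step ins s' : nth_error P pc0 = Some ins -> ins <> IHalt ->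
  step w ins (mkState pc0 R M) = s' -> runs_within w P t s' Q ->
  runs_within w P (S t) (mkState pc0 R M) Q.
Proof.
  intros H1 H2 <- [t0 [Rf [H3 [H4 H5]]]]. exists (S t0), Rf. split; [lia|]. split; auto.
  simpl. rewrite H1. destruct ins; auto. congruence.
Qed.

Ltac arith_step := intros H1 H2 H3;
  eapply runs_within_step; [exact H1 | discriminate | | exact H3];
  cbn -[Nat.ltb Nat.modulo]; unfold arith, wmod; cbn -[Nat.ltb Nat.modulo];
  rewrite Nat.mod_small; auto.

Lemma run_const d c : nth_error P pc0 = Some (IConst d c) -> c < 2 ^ w ->
  runs_within w P t (mkState (S pc0) (upd R d c) M) Q ->
  runs_within w P (S t) (mkState pc0 R M) Q.
Proof. arith_step. Qed.

Lemma run_add d a b : nth_error P pc0 = Some (IAdd d a b) -> R a + R b < 2 ^ w ->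
  runs_within w P t (mkState (S pc0) (upd R d (R a + R b)) M) Q ->
  runs_within w P (S t) (mkState pc0 R M) Q.
Proof. arith_step. Qed.

Lemma run_lt d a b : nth_error P pc0 = Some (ILt d a b) -> 1 < 2 ^ w ->
  runs_within w P t (mkState (S pc0) (upd R d (if R a <? R b then 1 else 0)) M) Q ->
  runs_within w P (S t) (mkState pc0 R M) Q.
Proof. arith_step. destruct (R a <? R b); lia. Qed.

Lemma run_load d a : nth_error P pc0 = Some (ILoad d a) -> M (R a) < 2 ^ w ->
  runs_within w P t (mkState (S pc0) (upd R d (M (R a))) M) Q ->
  runs_within w P (S t) (mkState pc0 R M) Q.
Proof. arith_step. Qed.

Lemma run_jz r l : nth_error P pc0 = Some (IJz r l) ->
  runs_within w P t (mkState (if R r =? 0 then l else S pc0) R M) Q ->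
  runs_within w P (S t) (mkState pc0 R M) Q.
Proof. intros. eapply runs_within_step; eauto. discriminate. Qed.

Lemma run_jmp l : nth_error P pc0 = Some (IJmp l) ->
  runs_within w P t (mkState l R M) Q ->
  runs_within w P (S t) (mkState pc0 R M) Q.
Proof. intros. eapply runs_within_step; eauto. discriminate. Qed.

End Steps.

Ltac regs_simpl :=
  cbn [upd Nat.eqb] in *;
  repeat match goal with H : ?R ?k = _ |- context[?R ?k] => is_var R; rewrite H end.

(* The
   budget must unify with [S _], which is why budgets are written [k + rest] with a
   numeral [k]: a numeral on the left unfolds to [S] without exposing [Nat.add]'s fixpoint. *)
Ltac step side :=
  first [ eapply run_const; [reflexivity | regs_simpl; side | cbn [upd Nat.eqb]]
        | eapply run_add; [reflexivity | regs_simpl; side | cbn [upd Nat.eqb]]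
        | eapply run_lt; [reflexivity | regs_simpl; side | cbn [upd Nat.eqb]]
        | eapply run_load; [reflexivity | regs_simpl; side | cbn [upd Nat.eqb]]
        | eapply run_jz; [reflexivity | cbn [upd Nat.eqb]]
        | eapply run_jmp; [reflexivity | cbn [upd Nat.eqb]] ].

(* Register 1 holds [i], register 2 holds [j]; the answer is left in register 0.
   Lines 0-27 load the stored span frequency and mode into registers 6 and 0 and set
   up the left scan of positions [i, prefix_end): register 7 is the current position,
   8 the end, 9 the bound [j+1], 10-13 the bases of the arrays [occ_rank], [occ_end],
   [occ_table], [elem], and 14 the number of completed scans. Lines 28-47 are the scan:
   for each position the inner loop (36-45) raises the best frequency (register 6) while
   the next occurrence [occ_table[occ_rank + f]] stays below the bound, recording the
   value (register 17) as the new best. Line 48 halts after the second scan; lines 50-70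
   set up that scan, on [rev A]. *)
Definition query_program : program := [
  (*0*) IConst 3 1; IConst 4 0; ILoad 4 4; IAdd 4 4 1; ILoad 4 4;
  (*5*) IConst 5 1; ILoad 5 5; IAdd 5 5 2; ILoad 5 5; IAdd 4 4 5;
  (*10*) ILoad 6 4; IAdd 4 4 3; ILoad 0 4; IAdd 7 1 21; IConst 8 2;
  (*15*) ILoad 8 8; IAdd 8 8 1; ILoad 8 8; IAdd 9 2 3; IConst 10 3;
  (*20*) ILoad 10 10; IConst 11 4; ILoad 11 11; IConst 12 5; ILoad 12 12;
  (*25*) IConst 13 6; ILoad 13 13; IConst 14 0;
  (*28*) ILt 19 7 8; IJz 19 48;
  (*30*) IAdd 4 10 7; ILoad 15 4; IAdd 4 11 7; ILoad 16 4; IAdd 4 13 7; ILoad 17 4;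
  (*36*) IAdd 18 15 6; ILt 19 18 16; IJz 19 46; IAdd 4 12 18;
  (*40*) ILoad 20 4; ILt 19 20 9; IJz 19 46; IAdd 6 6 3; IAdd 0 17 21; IJmp 36;
  (*46*) IAdd 7 7 3; IJmp 28;
  (*48*) IJz 14 50; IHalt;
  (*50*) IConst 14 1;
  (*51*) IConst 4 11; ILoad 4 4; IAdd 4 4 2; ILoad 7 4;
  (*55*) IConst 4 12; ILoad 4 4; IAdd 4 4 2; ILoad 8 4;
  (*59*) IConst 4 13; ILoad 4 4; IAdd 4 4 1; ILoad 9 4;
  (*63*) IConst 10 7; ILoad 10 10; IConst 11 8; ILoad 11 11;
  (*67*) IConst 12 9; ILoad 12 12; IConst 13 10; ILoad 13 13; IJmp 28 ].

Ltac ltb_true a b := rewrite (proj2 (Nat.ltb_lt a b)) by lia.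
Ltac ltb_false a b := rewrite (proj2 (Nat.ltb_ge a b)) by lia.

Ltac upd_frame := unfold upd;
  repeat match goal with |- context [?r =? ?k] => destruct (Nat.eqb_spec r k); [lia|] end; auto.

Ltac side_by Hm := solve [ auto | lia | eapply proj2, Hm; lia | eapply proj1, Hm; lia ].

Section Loops.
Variables (w : nat) (M : nat -> nat).
Hypothesis HW1 : 1 < 2 ^ w.

Lemma inner_loop_run (g0 e x VB B1 c : nat)
  (Hc : forall h, (g0 + h < e /\ M (VB + (g0 + h)) < B1) <-> h < c)
  (Hm : forall g, g < e -> VB + g < 2 ^ w /\ M (VB + g) < 2 ^ w)
  (Hx : x < 2 ^ w) :
  forall d f R t Q, c - f = d -> R 15 = g0 -> R 16 = e -> R 17 = x -> R 6 = f -> R 12 = VB ->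
  R 9 = B1 -> R 3 = 1 -> R 21 = 0 -> g0 + Nat.max f c + 1 < 2 ^ w ->
  (forall R', R' 6 = Nat.max f c -> R' 0 = (if f <? c then x else R 0) ->
     (forall r, r <> 0 -> r <> 4 -> r <> 6 -> r <> 18 -> r <> 19 -> r <> 20 -> R' r = R r) ->
     runs_within w query_program t (mkState 46 R' M) Q) ->
  runs_within w query_program (7 + (10 * d + t)) (mkState 36 R M) Q.
Proof.
  induction d as [|d IH]; intros f R t Q Hd H15 H16 H17 H6 H12 H9 H3 H21 Hb K.
  - do 3 step ltac:(side_by Hm). regs_simpl.
    destruct (Nat.ltb_spec (g0 + f) e); cbn beta iota.
    + do 4 step ltac:(side_by Hm). regs_simpl.
      assert (~ M (VB + (g0 + f)) < B1) by (intros C; assert (f < c) by (apply Hc; auto); lia).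
      ltb_false (M (VB + (g0 + f))) B1. cbn beta iota.
      eapply runs_within_mono; [|apply K]; [lia | regs_simpl; lia | | ].
      * regs_simpl. ltb_false f c. auto.
      * intros. upd_frame.
    + assert (~ f < c) by (intros C; apply Hc in C; lia).
      eapply runs_within_mono; [|apply K]; [lia | regs_simpl; lia | | ].
      * regs_simpl. ltb_false f c. auto.
      * intros. upd_frame.
  - assert (Hf : f < c) by lia. apply Hc in Hf as [Hf1 Hf2].
    replace (7 + (10 * S d + t)) with (17 + (10 * d + t)) by lia.
    do 3 step ltac:(side_by Hm). regs_simpl. ltb_true (g0 + f) e. cbn beta iota.
    do 4 step ltac:(side_by Hm). regs_simpl. ltb_true (M (VB + (g0 + f))) B1. cbn beta iota.
    do 3 step ltac:(side_by Hm).
    eapply runs_within_mono; [|eapply (IH (S f) _ t)]; try (regs_simpl; auto; lia).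
    intros R' E6 E0 Ef. apply K.
    + rewrite E6. lia.
    + rewrite E0. regs_simpl. destruct (S f <? c); ltb_true f c; auto.
    + intros. rewrite Ef by auto. upd_frame.
Qed.

Section ScanLoop.
Variables (GB EB AB VB B1 hi lo Fmax : nat) (Gv Ev xv cc : nat -> nat).
Hypothesis Hpos : forall q, lo <= q < hi ->
  M (GB + q) = Gv q /\ M (EB + q) = Ev q /\ M (AB + q) = xv q.
Hypothesis Htest : forall q, lo <= q < hi ->
  forall h, (Gv q + h < Ev q /\ M (VB + (Gv q + h)) < B1) <-> h < cc q.
Hypothesis Hcc : forall q, lo <= q < hi -> cc q <= Fmax.
Hypothesis Hbig : forall q, lo <= q < hi -> GB + q < 2 ^ w /\ EB + q < 2 ^ w /\ AB + q < 2 ^ w /\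
   Ev q < 2 ^ w /\ xv q < 2 ^ w /\ Gv q + Fmax + 1 < 2 ^ w.
Hypothesis Hvb : forall q g, lo <= q < hi -> g < Ev q -> VB + g < 2 ^ w /\ M (VB + g) < 2 ^ w.
Hypothesis Hhi : hi + 1 < 2 ^ w.

(* Each position costs 17 steps, each raise of the best frequency 10 more. *)
Lemma scan_loop_run : forall c p f m R t Q, hi - p = c -> lo <= p -> f <= Fmax ->
  R 7 = p -> R 8 = hi -> R 6 = f -> R 0 = m -> R 10 = GB -> R 11 = EB -> R 12 = VB -> R 13 = AB ->
  R 9 = B1 -> R 3 = 1 -> R 21 = 0 ->
  (forall R', R' 6 = fst (scan cc xv p c f m) -> R' 0 = snd (scan cc xv p c f m) ->
     (forall r, r <> 0 -> r <> 4 -> r <> 6 -> r <> 7 -> r <> 15 -> r <> 16 -> r <> 17 -> r <> 18 ->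
        r <> 19 -> r <> 20 -> R' r = R r) ->
     runs_within w query_program t (mkState 48 R' M) Q) ->
  runs_within w query_program (2 + (17 * c + 10 * (fst (scan cc xv p c f m) - f) + t))
    (mkState 28 R M) Q.
Proof.
  induction c as [|c IH]; intros p f m R t Q Hd Hlo Hf H7 H8 H6 H0 H10 H11 H12 H13 H9 H3 H21 K.
  - step ltac:(side_by Hvb). regs_simpl. ltb_false p hi. cbn beta iota.
    step ltac:(side_by Hvb). regs_simpl. cbn beta iota.
    eapply runs_within_mono; [|apply K]; cbn beta iota; try lia; regs_simpl; auto.
    intros. upd_frame.
  - assert (Hq : lo <= p < hi) by lia.
    destruct (Hpos p Hq) as [P1 [P2 P3]]. destruct (Hbig p Hq) as [B1' [B2 [B3 [B4 [B5 B6]]]]].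
    pose proof (Hcc p Hq) as C1.
    rewrite scan_S. rewrite scan_S in K.
    set (f' := Nat.max f (cc p)). set (m' := if f <? cc p then xv p else m).
    set (rest := 17 * c + 10 * (fst (scan cc xv (S p) c f' m') - f') + t).
    pose proof (le_scan cc xv (S p) c f' m') as PM.
    apply (runs_within_mono _ _ (8 + (7 + (10 * (cc p - f) + (2 + (2 + rest)))))).
    { unfold rest. assert (f' = Nat.max f (cc p)) by reflexivity. clearbody f' m'.
      generalize dependent (fst (scan cc xv (S p) c f' m')). intros. lia. }
    step ltac:(side_by Hvb). regs_simpl. ltb_true p hi. cbn beta iota.
    step ltac:(side_by Hvb). regs_simpl. cbn beta iota.
    do 6 step ltac:(side_by Hvb).
    eapply (inner_loop_run (Gv p) (Ev p) (xv p) VB B1 (cc p)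
         (Htest p Hq) (fun g Hg => Hvb p g Hq Hg) B5 _ f _ (2 + (2 + rest)));
      try (regs_simpl; auto; lia).
    + intros R' E6 E0 Ef.
      step ltac:(rewrite !Ef by lia; regs_simpl; lia). step ltac:(auto).
      eapply (IH (S p) f' m' _ t).
      all: try (intros R'' F6 F0 Ff; apply K; auto;
        intros r Z0 Z4 Z6 Z7 Z15 Z16 Z17 Z18 Z19 Z20; rewrite Ff by auto;
        unfold upd; destruct (Nat.eqb_spec r 7); [lia|]; rewrite Ef by auto; upd_frame).
      all: regs_simpl; try rewrite !Ef by lia; regs_simpl; try rewrite E6; try rewrite E0; auto; try lia.
Qed.
End ScanLoop.
End Loops.

Section QueryRun.
Variables (w : nat) (A : list nat) (b i j : nat) (M : nat -> nat).
Hypotheses (Hb : 1 <= b) (Hi : 1 <= i) (Hij : i <= j) (Hj : j <= length A).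
Hypothesis HW : 2 * store_size A b + value_bound A + 3 * length A + 10 < 2 ^ w.
Hypothesis HM : forall a, M a = nth a (store A b) 0.

Let n := length A.
Let row := table_base n + 2 * table_dim n b * first_block b i.
Let f0 := freq (span A b i j) (mode_of (span A b i j)).
Let m0 := mode_of (span A b i j).

Lemma memory_header k : k < 14 -> M k = array_base k n.
Proof. intros. rewrite HM. now apply store_header. Qed.

Lemma memory_array k p : k < 14 -> p <= n -> M (array_base k n + p) = array_entry A b k p.
Proof. intros. rewrite HM. now apply store_array. Qed.

Lemma memory_span_freq : M (row + 2 * (j / b)) = f0.
Proof.
  rewrite <- (Nat.add_0_r (row + _)), HM. unfold row.
  apply store_table; [lia | apply first_block_lt_dim | apply div_lt_dim]; lia.
Qed.

Lemma memory_span_mode : M (row + 2 * (j / b) + 1) = m0.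
Proof.
  rewrite HM. unfold row. apply store_table; [lia | apply first_block_lt_dim | apply div_lt_dim]; lia.
Qed.

Lemma memory_le a : a < store_size A b -> M a <= store_size A b + value_bound A + n + 2.
Proof. intros. rewrite HM, nth_store by auto. now apply cell_le. Qed.

Lemma query_bounds :
  row + 2 * (j / b) + 1 < store_size A b /\ table_base n <= store_size A b /\
  i <= prefix_end A b i <= n + 1 /\ b * (j / b) <= j /\ f0 <= n /\ m0 < value_bound A.
Proof.
  pose proof (first_block_lt_dim n b i Hb ltac:(lia)). pose proof (div_lt_dim n b j Hj).
  pose proof (prefix_end_bounds A b i Hb ltac:(lia)). pose proof (last_block_bounds b j Hb).
  pose proof (span_freq_le_length A b i j).
  assert (m0 < value_bound A)
    by (apply mode_of_lt; [apply Forall_blocks, value_bound_spec | unfold value_bound; lia]).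
  assert (table_dim n b * first_block b i + j / b + 1 <= table_dim n b * table_dim n b) by nia.
  unfold row, store_size. fold n. lia.
Qed.

Lemma scan_run k X lo hi jj f m R t Q : k = 3 /\ X = A \/ k = 7 /\ X = rev A ->
  1 <= lo -> hi <= n + 1 -> jj <= n -> f <= n ->
  R 7 = lo -> R 8 = hi -> R 6 = f -> R 0 = m -> R 10 = array_base k n ->
  R 11 = array_base (k + 1) n -> R 12 = array_base (k + 2) n -> R 13 = array_base (k + 3) n ->
  R 9 = S jj -> R 3 = 1 -> R 21 = 0 ->
  (forall R', R' 6 = fst (scan (tail_freq X jj) (elem X) lo (hi - lo) f m) ->
     R' 0 = snd (scan (tail_freq X jj) (elem X) lo (hi - lo) f m) ->
     (forall r, r <> 0 -> r <> 4 -> r <> 6 -> r <> 7 -> r <> 15 -> r <> 16 -> r <> 17 -> r <> 18 ->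
        r <> 19 -> r <> 20 -> R' r = R r) ->
     runs_within w query_program t (mkState 48 R' M) Q) ->
  runs_within w query_program
    (2 + (17 * (hi - lo) + 10 * (fst (scan (tail_freq X jj) (elem X) lo (hi - lo) f m) - f) + t))
    (mkState 28 R M) Q.
Proof.
  intros HX Hlo Hhi Hjj Hf H7 H8 H6 H0 H10 H11 H12 H13 H9 H3 H21 K.
  set (V := value_bound A).
  assert (HV : 0 < V) by (unfold V, value_bound; lia).
  assert (HXV : Forall (fun x => x < V) X)
    by (destruct HX as [[_ ->] | [_ ->]]; [apply value_bound_spec | apply value_bound_rev]).
  assert (HXn : length X = n) by (destruct HX as [[_ ->] | [_ ->]]; [|apply length_rev]; auto).
  assert (HMX : forall q, q <= n ->
    M (array_base k n + q) = occ_rank X q /\ M (array_base (k + 1) n + q) = occ_end X q /\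
    M (array_base (k + 2) n + q) = nth q (occ_table X V) 0 /\ M (array_base (k + 3) n + q) = elem X q)
    by (intros q Hq; destruct HX as [[-> ->] | [-> ->]]; rewrite !memory_array by lia; auto).
  assert (Hk : array_base (k + 3) n + n < store_size A b).
  { destruct query_bounds as (_ & HT & _).
    destruct HX as [[-> _] | [-> _]]; unfold table_base, array_base in *; lia. }
  assert (Hbases : array_base (k + 1) n = array_base k n + S n /\
    array_base (k + 2) n = array_base k n + 2 * S n /\ array_base (k + 3) n = array_base k n + 3 * S n)
    by (unfold array_base; repeat split; ring).
  assert (Hrank : forall q, occ_rank X q <= n /\ occ_end X q <= n).
  { intros q. pose proof (occ_rank_le_end X q). pose proof (occ_end_le X q). lia. }
  pose proof memory_le as HMb.
  apply (scan_loop_run w M ltac:(lia) (array_base k n) (array_base (k + 1) n)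
    (array_base (k + 3) n) (array_base (k + 2) n) (S jj) hi lo n
    (occ_rank X) (occ_end X) (elem X) (tail_freq X jj)); auto.
  - intros q Hq. destruct (HMX q ltac:(lia)) as [A1 [A2 [A3 A4]]]. auto.
  - intros q Hq h. destruct (HMX q ltac:(lia)) as [A1 [A2 [A3 A4]]].
    rewrite <- (occ_table_test X V q jj h (elem_lt X V q HXV HV)) by lia.
    destruct (Hrank q).
    split; intros [Q1 Q2]; split; auto;
      destruct (HMX (occ_rank X q + h) ltac:(lia)) as [_ [_ [E _]]]; congruence.
  - intros q Hq. pose proof (tail_freq_le X jj q). lia.
  - intros q Hq. destruct (HMX q ltac:(lia)) as [A1 [A2 [A3 A4]]]. destruct (Hrank q).
    pose proof (elem_lt X V q HXV HV). unfold V in *. repeat split; lia.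
  - intros q g Hq Hg. destruct (Hrank q).
    assert (Hg' : array_base (k + 2) n + g < store_size A b) by lia.
    pose proof (HMb _ Hg'). lia.
  - lia.
Qed.

Lemma right_scan_run R :
  R 1 = i -> R 2 = j -> R 3 = 1 -> R 21 = 0 -> R 14 = 0 ->
  R 6 = fst (left_scan A b i j) -> R 0 = snd (left_scan A b i j) ->
  runs_within w query_program
    (25 + (17 * (j - b * (j / b)) + 10 * (fst (query_scan A b i j) - fst (left_scan A b i j)) + 2))
    (mkState 48 R M) (fun R => is_mode (subarray A i j) (R 0)).
Proof.
  intros E1 E2 E3 E21 E14 E6 E0.
  pose proof query_bounds as QB. pose proof (left_scan_freq_le_length A b i j Hj) as Hfl.
  pose proof (memory_header 7 ltac:(lia)). pose proof (memory_header 8 ltac:(lia)).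
  pose proof (memory_header 9 ltac:(lia)). pose proof (memory_header 10 ltac:(lia)).
  pose proof (memory_header 11 ltac:(lia)). pose proof (memory_header 12 ltac:(lia)).
  pose proof (memory_header 13 ltac:(lia)).
  assert (F11 : M (array_base 11 n + j) = n + 1 - j) by (rewrite memory_array by lia; reflexivity).
  assert (F12 : M (array_base 12 n + j) = n + 1 - b * (j / b))
    by (rewrite memory_array by lia; reflexivity).
  assert (F13 : M (array_base 13 n + i) = n + 2 - i) by (rewrite memory_array by lia; reflexivity).
  step ltac:(idtac). rewrite E14. cbn beta iota delta [Nat.eqb].
  do 22 step ltac:(clear - HW QB Hi Hij Hj; unfold n, row, table_base, array_base in *; lia).
  assert (Ec : n + 1 - b * (j / b) - (n + 1 - j) = j - b * (j / b)) by lia.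
  eapply runs_within_mono; [|eapply (scan_run 7 (rev A) (n + 1 - j) (n + 1 - b * (j / b)) (n + 1 - i)
    (fst (left_scan A b i j)) (snd (left_scan A b i j)) _ 2 _)].
  { rewrite Ec. change (scan _ _ (n + 1 - j) (j - b * (j / b)) _ _) with (query_scan A b i j). lia. }
  all: try (regs_simpl; auto; lia).
  rewrite Ec. change (scan _ _ (n + 1 - j) (j - b * (j / b)) _ _) with (query_scan A b i j).
  intros R' G6 G0 Gf.
  assert (G14 : R' 14 = 1) by (rewrite Gf by lia; reflexivity).
  step ltac:(idtac). rewrite G14. cbn beta iota delta [Nat.eqb].
  apply runs_within_halt; [reflexivity|]. cbn. rewrite G0.
  apply query_scan_is_mode; auto.
Qed.

Theorem query_run :
  runs_within w query_program (60 + 54 * b)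
    (mkState 0 (fun r => if r =? 1 then i else if r =? 2 then j else 0) M)
    (fun R => is_mode (subarray A i j) (R 0)).
Proof.
  pose proof query_bounds as QB.
  pose proof (prefix_end_bounds A b i Hb ltac:(lia)). pose proof (last_block_bounds b j Hb).
  pose proof (query_freq_le A b i j Hb Hi Hij Hj) as Hq. fold f0 in Hq.
  assert (f0 <= fst (left_scan A b i j)) by apply le_scan.
  assert (fst (left_scan A b i j) <= fst (query_scan A b i j)) by apply le_scan.
  set (rest := 25 + (17 * (j - b * (j / b)) +
    10 * (fst (query_scan A b i j) - fst (left_scan A b i j)) + 2)).
  apply (runs_within_mono _ _ (28 + (2 + (17 * (prefix_end A b i - i) +
    10 * (fst (left_scan A b i j) - f0) + rest)))).
  { unfold rest. lia. }
  pose proof (memory_header 0 ltac:(lia)). pose proof (memory_header 1 ltac:(lia)).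
  pose proof (memory_header 2 ltac:(lia)). pose proof (memory_header 3 ltac:(lia)).
  pose proof (memory_header 4 ltac:(lia)). pose proof (memory_header 5 ltac:(lia)).
  pose proof (memory_header 6 ltac:(lia)).
  assert (F0 : M (array_base 0 n + i) = row) by (rewrite memory_array by lia; reflexivity).
  assert (F1 : M (array_base 1 n + j) = 2 * (j / b)) by (rewrite memory_array by lia; reflexivity).
  assert (F2 : M (array_base 2 n + i) = prefix_end A b i)
    by (rewrite memory_array by lia; reflexivity).
  pose proof memory_span_freq. pose proof memory_span_mode.
  do 28 step ltac:(clear - HW QB Hi Hij Hj; unfold n, row, table_base, array_base in *; lia).
  eapply runs_within_mono; [|eapply (scan_run 3 A i (prefix_end A b i) j f0 m0 _ rest _)].
  { change (scan _ _ i (prefix_end A b i - i) f0 m0) with (left_scan A b i j). lia. }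
  all: try (regs_simpl; auto; lia).
  change (scan _ _ i (prefix_end A b i - i) f0 m0) with (left_scan A b i j).
  intros R' E6 E0 Ef.
  apply right_scan_run; auto; rewrite Ef by lia; reflexivity.
Qed.
End QueryRun.

(** * Space and time bounds *)

Definition block_size (eps : R) (n : nat) : nat := Z.to_nat (up (Rpower (INR n) eps)).

Lemma block_size_spec eps n : (0 <= eps)%R -> 1 <= n ->
  1 <= block_size eps n /\ (INR (block_size eps n) <= 2 * Rpower (INR n) eps)%R.
Proof.
  intros He Hn. set (x := Rpower (INR n) eps).
  assert (Hx : (1 <= x)%R).
  { unfold x. rewrite <- (Rpower_O (INR n)) at 1 by (apply lt_0_INR; lia).
    apply Rle_Rpower; [apply (le_INR 1); auto | lra]. }
  destruct (archimed x) as [A1 A2].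
  assert (Hz : (0 <= up x)%Z) by (apply le_IZR; lra).
  assert (E : INR (block_size eps n) = IZR (up x))
    by (unfold block_size; fold x; rewrite INR_IZR_INZ, Z2Nat.id; auto).
  rewrite E. split; [|lra].
  enough (0 < block_size eps n) by lia. apply INR_lt. simpl. lra.
Qed.

(* [b >= n^eps] gives [n/b <= n^(1-eps)], so the [(n/b + 2)^2] table entries are
   [O(n^(2-2eps))], and so are the [O(n)] array cells since [eps <= 1/2]. *)
Lemma store_size_le_pow eps A : (0 <= eps <= 1/2)%R -> 1 <= length A ->
  (INR (store_size A (block_size eps (length A))) <= 1000 * Rpower (INR (length A)) (2 - 2 * eps))%R.
Proof.
  intros [He0 He1] Hn. set (n := length A) in *. set (b := block_size eps n).
  assert (Hb1 : 1 <= b) by apply (block_size_spec eps n He0 Hn).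
  set (N := INR n). set (x := Rpower N eps). set (y := Rpower N (1 - eps)).
  assert (HN : (1 <= N)%R) by (unfold N; apply (le_INR 1); auto).
  set (Z := Rpower N (2 - 2 * eps)).
  assert (Hyy : (y * y = Z)%R) by (unfold y, Z; rewrite <- Rpower_plus; f_equal; lra).
  assert (HZN : (N <= Z)%R).
  { unfold Z. rewrite <- (Rpower_1 N) at 1 by lra. apply Rle_Rpower; lra. }
  assert (Hy1 : (1 <= y)%R).
  { unfold y. rewrite <- (Rpower_O N) at 1 by lra. apply Rle_Rpower; lra. }
  assert (HNyx : (N = y * x)%R).
  { unfold y, x. rewrite <- Rpower_plus. replace (1 - eps + eps)%R with 1%R by lra.
    rewrite Rpower_1; lra. }
  assert (Hx0 : (0 < x)%R) by (unfold x, Rpower; apply exp_pos).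
  assert (Hxb : (x <= INR b)%R).
  { unfold b, block_size. fold N x. destruct (archimed x) as [A1 _].
    assert (Hz : (0 <= up x)%Z) by (apply le_IZR; lra).
    rewrite INR_IZR_INZ, Z2Nat.id by exact Hz. lra. }
  assert (Hq : (INR (n / b) <= y)%R).
  { pose proof (Nat.Div0.mul_div_le n b) as H. apply le_INR in H. rewrite mult_INR in H. fold N in H.
    apply Rmult_le_reg_r with x; auto. pose proof (pos_INR (n / b)). rewrite <- HNyx. nra. }
  unfold store_size, table_base, array_base, table_dim. fold n b.
  rewrite !plus_INR, !mult_INR, !plus_INR. fold N.
  replace (INR (S n)) with (N + 1)%R by (unfold N; rewrite S_INR; auto).
  replace (INR 14) with 14%R by (simpl; lra). replace (INR 2) with 2%R by (simpl; lra).
  pose proof (pos_INR (n / b)). nra.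
Qed.

Lemma word_size_bound n u : 1 <= n -> 1 <= u -> 252 * n * n + u <= (n + u) ^ 10.
Proof.
  intros Hn Hu. replace ((n + u) ^ 10) with ((n + u) ^ 2 * (n + u) ^ 8) by (rewrite <- Nat.pow_add_r; auto).
  assert (2 ^ 8 <= (n + u) ^ 8) by (apply Nat.pow_le_mono_l; lia).
  simpl (_ ^ 2). simpl (2 ^ 8) in H. nia.
Qed.

Lemma store_size_le_quadratic A b : 1 <= b ->
  store_size A b <= 2 * length A * length A + 22 * length A + 36.
Proof.
  intros Hb. unfold store_size, table_base, array_base, table_dim.
  pose proof (Nat.Div0.div_le_upper_bound (length A) b (length A) ltac:(nia)). nia.
Qed.

Lemma store_fits_word A b u w : 1 <= b -> 1 <= length A -> Forall (fun x => x < u) A ->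
  (length A + u) ^ 10 <= 2 ^ w ->
  2 * store_size A b + value_bound A + 3 * length A + 10 < 2 ^ w.
Proof.
  intros Hb Hn HAu Hw.
  assert (HA : A <> []) by (intros ->; simpl in Hn; lia).
  pose proof (proj2 (list_max_lt u HA) HAu). unfold value_bound.
  assert (Hu : 1 <= u) by (destruct A; [congruence | inversion HAu; lia]).
  pose proof (store_size_le_quadratic A b Hb). pose proof (word_size_bound (length A) u Hn Hu). nia.
Qed.

Lemma store_words_lt A b w : 1 <= b ->
  store_size A b + value_bound A + length A + 2 < 2 ^ w -> Forall (fun x => x < 2 ^ w) (store A b).
Proof.
  intros Hb HW. apply Forall_forall. intros v Hv. unfold store in Hv.
  apply in_map_iff in Hv as [a [<- Ha]]. apply in_seq in Ha.
  pose proof (cell_le A b a Hb ltac:(lia)). lia.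
Qed.

Open Scope R_scope.
Theorem theorem1 :
  forall eps : R, 0 <= eps <= 1/2 ->
  exists (P : program) (D : nat -> list nat -> list nat) (c : R) (k : nat),
    0 < c /\
    forall (n u w : nat) (A : list nat),
      (1 <= n)%nat ->
      length A = n ->
      Forall (fun x => (x < u)%nat) A ->
      ((n + u) ^ k <= 2 ^ w)%nat ->
      Forall (fun x => (x < 2 ^ w)%nat) (D w A) /\
      INR (length (D w A)) <= c * Rpower (INR n) (2 - 2 * eps) /\
      forall i j : nat, (1 <= i)%nat -> (i <= j)%nat -> (j <= n)%nat ->
        exists (t : nat) (R : nat -> nat),
          exec w P t (query_state (D w A) i j) = Some R /\
          INR t <= c * Rpower (INR n) eps /\
          is_mode (subarray A i j) (R 0%nat).
Proof.
  intros eps Heps.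
  exists query_program, (fun w A => store A (block_size eps (length A))), 1000, 10%nat.
  split; [lra|]. intros n u w A Hn <- HAu Hw.
  set (b := block_size eps (length A)).
  destruct (block_size_spec eps (length A) (proj1 Heps) Hn) as [Hb1 Hb2]. fold b in Hb1, Hb2.
  pose proof (store_fits_word A b u w Hb1 Hn HAu Hw) as HW.
  split; [|split].
  - apply store_words_lt; auto; lia.
  - rewrite length_store. now apply store_size_le_pow.
  - intros i j Hi Hij Hj.
    destruct (query_run w A b i j (fun a => nth a (store A b) 0%nat) Hb1 Hi Hij Hj HW (fun _ => eq_refl))
      as [t [R [Ht [Hex Hmode]]]].
    exists t, R. split; [exact Hex|]. split; [|exact Hmode].
    apply le_INR in Ht. rewrite plus_INR, mult_INR in Ht. simpl (INR 60) in Ht. simpl (INR 54) in Ht.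
    assert (1 <= INR b) by (apply (le_INR 1); auto). lra.
Qed.
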